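(* Let $\mathfrak q:\mathbb R^n\to\mathbb R$ be a non-degenerate quadratic form with rational coefficients, $\mathfrak Q_{\mathfrak q}=\{\bar x:\mathfrak q(\bar x)=1\}$, and let $\psi$ be an approximating function with $\lim_{x\to\infty}x\psi(x)=0$. Let $\bar x\in\mathfrak Q_{\mathfrak q}$ and let $\frac1q\bar p\in\mathbb Q^n$ satisfy $\|\bar x-\frac1q\bar p\|\le\frac{\psi(q)}{q}$. If $q$ is large enough, then $\frac1q\bar p\in\mathfrak Q_{\mathfrak q}$.
   Context: $\|\cdot\|$ is the max-norm. An approximating function is a decreasing $\psi:\mathbb R_+\to\mathbb R_+$ with $\psi(x)\to0$ as $x\to\infty$. Rational vectors are written $\frac1q\bar p$ with $q\in\mathbb N$, $\bar p\in\mathbb Z^n$, $\gcd(q,p_1,\dots,p_n)=1$. *)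

From HB Require Import structures.
From mathcomp Require Import all_boot all_order all_algebra.
From mathcomp Require Import all_classical all_reals all_analysis.
Set Implicit Arguments. Unset Strict Implicit. Unset Printing Implicit Defensive.
Import Order.TTheory GRing.Theory Num.Theory.
Import numFieldNormedType.Exports.
Local Open Scope classical_set_scope.
Local Open Scope ring_scope.

Definition maxnorm (R : realType) (n : nat) (v : 'rV[R]_n) : R :=
  \big[Num.max/0]_(i < n) `|v ord0 i|.

Definition qform (R : realType) (n : nat) (A : 'M[rat]_n) (x : 'rV[R]_n) : R :=
  \sum_(i < n) \sum_(j < n) ratr (A i j) * x ord0 i * x ord0 j.

Definition nondegenerate_qf (n : nat) (A : 'M[rat]_n) : Prop :=
  A^T = A /\ \det A != 0.

Definition approximating_function (R : realType) (psi : R -> R) : Prop :=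
  (forall x y : R, 0 <= x -> x <= y -> psi y <= psi x) /\
  (forall x : R, 0 <= x -> 0 <= psi x) /\
  (psi x @[x --> +oo] --> (0 : R)).

Definition ratvec (R : realType) (n : nat) (q : nat) (p : 'rV[int]_n) : 'rV[R]_n :=
  \row_(i < n) ((p ord0 i)%:~R / q%:R).

Definition reduced (n : nat) (q : nat) (p : 'rV[int]_n) : bool :=
  (\big[gcdn/q]_(i < n) `|p ord0 i|%N == 1)%N.

From HB Require Import structures.
From mathcomp Require Import all_boot all_order all_algebra.
From mathcomp Require Import all_classical all_reals all_analysis.
From mathcomp Require Import ring lra.
Set Implicit Arguments. Unset Strict Implicit. Unset Printing Implicit Defensive.
Import Order.TTheory GRing.Theory Num.Theory.
Import numFieldNormedType.Exports.
Local Open Scope classical_set_scope.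
Local Open Scope ring_scope.

(* Let D > 0 clear the denominators of the coefficients of the form Q, so that
   D q^2 Q(p/q) is an integer.  Near x the form Q is Lipschitz, with constant L
   say, hence |D q^2 (Q(p/q) - 1)| <= L D q^2 |x - p/q| <= L D q psi(q), which is
   < 1 for q large because q psi(q) -> 0; an integer of absolute value < 1
   vanishes. *)

Lemma seq_rat_common_den (s : seq rat) :
  exists2 D : nat, (0 < D)%N & forall r, r \in s -> r * D%:R \is a Num.int.
Proof.
elim: s => [|r s [D D0 HD]]; first by exists 1%N.
have denE : (`|denq r|%N)%:R = (denq r)%:~R :> rat by rewrite -[in RHS]absz_denq.
exists (D * `|denq r|)%N; first by rewrite muln_gt0 D0 absz_gt0 denq_neq0.
move=> r'; rewrite inE natrM denE => /predU1P [->|/HD r'D].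
  by rewrite mulrCA -numqE rpredM ?intr_int ?natr_int.
by rewrite mulrA rpredM ?intr_int.
Qed.

Lemma mx_rat_common_den (m n : nat) (A : 'M[rat]_(m, n)) :
  exists2 D : nat, (0 < D)%N & forall i j, A i j * D%:R \is a Num.int.
Proof.
have [D D0 HD] := seq_rat_common_den [seq A ij.1 ij.2 | ij <- enum {: 'I_m * 'I_n}].
exists D => // i j; apply: HD.
by apply/mapP; exists (i, j); rewrite ?mem_enum.
Qed.

Lemma ler_maxnorm (R : realType) (n : nat) (v : 'rV[R]_n) (i : 'I_n) :
  `|v ord0 i| <= maxnorm v.
Proof. exact: le_bigmax. Qed.

Lemma maxnorm_ge0 (R : realType) (n : nat) (v : 'rV[R]_n) : 0 <= maxnorm v.
Proof. exact: bigmax_ge_id. Qed.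

Lemma ler_distM (R : realFieldType) (a b c e M d : R) :
  `|b| <= M -> `|c| <= M -> `|a - c| <= d -> `|b - e| <= d ->
  `|a * b - c * e| <= 2 * M * d.
Proof.
move=> hb hc hac hbe.
have -> : a * b - c * e = (a - c) * b + c * (b - e) by ring.
apply: (le_trans (ler_normD _ _)); rewrite !normrM.
have d0 : 0 <= d by apply: le_trans hac.
have h1 : `|a - c| * `|b| <= d * M by apply: ler_pM.
have h2 : `|c| * `|b - e| <= M * d by apply: ler_pM.
lra.
Qed.

Lemma ler_dist_qform (R : realType) (n : nat) (A : 'M[rat]_n) (x y : 'rV[R]_n) (M d : R) :
  (forall i, `|x ord0 i| <= M) -> (forall i, `|y ord0 i| <= M) ->
  (forall i, `|x ord0 i - y ord0 i| <= d) ->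
  `|qform A x - qform A y| <= 2 * M * d * \sum_i \sum_j `|ratr (A i j) : R|.
Proof.
move=> hx hy hd; rewrite /qform -sumrB mulr_sumr.
apply: (le_trans (ler_norm_sum _ _ _)); apply: ler_sum => i _.
rewrite -sumrB mulr_sumr; apply: (le_trans (ler_norm_sum _ _ _)).
apply: ler_sum => j _.
have -> : ratr (A i j) * x ord0 i * x ord0 j - ratr (A i j) * y ord0 i * y ord0 j
  = ratr (A i j) * (x ord0 i * x ord0 j - y ord0 i * y ord0 j) by ring.
by rewrite normrM mulrC ler_wpM2r // ler_distM.
Qed.

Lemma qform_lipschitz_near (R : realType) (n : nat) (A : 'M[rat]_n) (x : 'rV[R]_n) :
  exists2 L : R, 0 <= L & forall y, maxnorm (x - y) <= 1 ->
    `|qform A x - qform A y| <= L * maxnorm (x - y).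
Proof.
pose M := maxnorm x + 1.
have M0 : 0 <= M by have := maxnorm_ge0 x; rewrite /M; lra.
exists (2 * M * \sum_i \sum_j `|ratr (A i j) : R|).
  by rewrite !mulr_ge0 //; apply: sumr_ge0 => i _; apply: sumr_ge0.
move=> y d1; rewrite mulrAC.
have dxy i : `|x ord0 i - y ord0 i| <= maxnorm (x - y).
  by have := ler_maxnorm (x - y) i; rewrite !mxE.
have hxM i : `|x ord0 i| <= M by have := ler_maxnorm x i; rewrite /M; lra.
apply: ler_dist_qform => // i.
have -> : y ord0 i = x ord0 i - (x ord0 i - y ord0 i) by ring.
have := ler_normB (x ord0 i) (x ord0 i - y ord0 i).
have := dxy i; have := ler_maxnorm x i; rewrite /M; lra.
Qed.

Lemma qform_ratvec_scaled_int (R : realType) (n : nat) (A : 'M[rat]_n) (D q : nat)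
    (p : 'rV[int]_n) :
  (0 < q)%N -> (forall i j, A i j * D%:R \is a Num.int) ->
  qform A (ratvec R q p) * (D%:R * q%:R ^+ 2) \is a Num.int.
Proof.
move=> q0 hA; rewrite /qform mulr_suml; apply: rpred_sum => i _.
rewrite mulr_suml; apply: rpred_sum => j _.
have qn : q%:R != 0 :> R by rewrite pnatr_eq0 -lt0n.
have -> : ratr (A i j) * ratvec R q p ord0 i * ratvec R q p ord0 j * (D%:R * q%:R ^+ 2)
   = ratr (A i j * D%:R) * (p ord0 i)%:~R * (p ord0 j)%:~R.
  by rewrite /ratvec !mxE rmorphM rmorph_nat /=; field.
have /intrP [z ->] := hA i j.
by rewrite rmorph_int !rpredM ?intr_int.
Qed.

Lemma int_norm_lt1_eq0 (R : archiNumDomainType) (z : R) :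
  z \is a Num.int -> `|z| < 1 -> z = 0.
Proof.
move=> zi z1; apply/eqP/negPn/negP => z0.
by move: (norm_intr_ge1 zi z0); rewrite (lt_geF z1).
Qed.

Lemma qform_ratvec_eq1 (R : realType) (n : nat) (A : 'M[rat]_n) (D q : nat)
    (p : 'rV[int]_n) :
  (0 < D)%N -> (0 < q)%N -> (forall i j, A i j * D%:R \is a Num.int) ->
  `|qform A (ratvec R q p) - 1| * (D%:R * q%:R ^+ 2) < 1 ->
  qform A (ratvec R q p) = 1.
Proof.
move=> D0 q0 ADint small.
have K0 : D%:R * q%:R ^+ 2 != 0 :> R by rewrite mulf_neq0 ?expf_neq0 // pnatr_eq0 -lt0n.
have : (qform A (ratvec R q p) - 1) * (D%:R * q%:R ^+ 2) = 0.
  apply: int_norm_lt1_eq0.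
    by rewrite mulrBl mul1r rpredB ?qform_ratvec_scaled_int ?rpredM ?rpredX ?natr_int.
  by rewrite normrM [`|D%:R * _|]ger0_norm // mulr_ge0 ?ler0n ?sqr_ge0.
by move/eqP; rewrite mulf_eq0 (negPf K0) orbF subr_eq0 => /eqP.
Qed.

Lemma cvgr0_nat_lt (R : realType) (f : R -> R) (e : R) :
  f x @[x --> +oo] --> 0 -> 0 < e ->
  exists N : nat, forall q : nat, (N <= q)%N -> `|f q%:R| < e.
Proof.
move=> f0 e0; have [M [_ HM]] := cvgr0_norm_lt _ f0 _ e0.
exists (Num.truncn M).+1 => q hq; apply: HM.
by apply: (lt_le_trans (truncnS_gt M)); rewrite ler_nat.
Qed.

Theorem lemma4p1 (R : realType) (n : nat) (A : 'M[rat]_n) (psi : R -> R) :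
  nondegenerate_qf A ->
  approximating_function psi ->
  (x * psi x @[x --> +oo] --> (0 : R)) ->
  forall x : 'rV[R]_n, qform A x = 1 ->
  exists Q0 : nat, forall (q : nat) (p : 'rV[int]_n),
    (Q0 <= q)%N -> (0 < q)%N -> reduced q p ->
    maxnorm (x - ratvec R q p) <= psi q%:R / q%:R ->
    qform A (ratvec R q p) = 1.
Proof.
move=> _ _ psi0 x qx1.
have [D D0 ADint] := mx_rat_common_den A.
have [L L0 Lip] := qform_lipschitz_near A x.
have LD0 : 0 <= L * D%:R by rewrite mulr_ge0.
pose e := (L * D%:R + 1)^-1.
have e0 : 0 < e by rewrite invr_gt0; lra.
have LDe : L * D%:R * e < 1 by rewrite ltr_pdivrMr; lra.
have e1 : e <= 1 by rewrite invf_le1; lra.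
have [Q0 HQ0] := cvgr0_nat_lt psi0 e0.
exists Q0 => q p /HQ0 qpsi q0 _ dpsi; apply: (qform_ratvec_eq1 D0 q0 ADint).
set d := maxnorm _ in dpsi *; set t := q%:R : R in qpsi dpsi *.
have t1 : 1 <= t by rewrite ler1n.
have d0 : 0 <= d := maxnorm_ge0 _.
have dt2 : d * t ^+ 2 < e.
  rewrite ler_pdivlMr in dpsi; last lra.
  apply: le_lt_trans (le_lt_trans (ler_norm _) qpsi).
  by rewrite expr2 mulrA mulrC ler_wpM2l //; lra.
have d1 : d <= 1.
  have : 1 <= t ^+ 2 by rewrite exprn_ege1.
  nra.
have := Lip _ d1; rewrite qx1 distrC -/d => Lipd.
apply: le_lt_trans (ler_wpM2r _ Lipd) _; first by rewrite mulr_ge0 ?ler0n ?sqr_ge0.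
apply: le_lt_trans LDe.
have -> : L * d * (D%:R * t ^+ 2) = L * D%:R * (d * t ^+ 2) by ring.
by rewrite ler_wpM2l // ltW.
Qed.
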